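(* Let $\mathcal G$ be a graph. An agglomeration $a\in\mathbf A(\mathcal G)$ is an atom of $\mathbf A(\mathcal G)$ if and only if $a=\mathbf 1_{\mathcal G'}$ for a non-null, connected subgraph $\mathcal G'$ of $\mathcal G$.
   Context: A graph $\mathcal G=(V,E,r)$ consists of a finite vertex set $V$, a finite edge set $E$ disjoint from $V$, and a map $r$ assigning to each edge a two-element subset of $V$; multiple edges allowed, no loops. An agglomeration on $\mathcal G$ is a function $a\colon V\cup E\to\mathbb N_0$ with $a(v)\ge a(e)$ whenever $v$ is incident with $e$; $\mathbf A(\mathcal G)$ is the monoid of agglomerations under pointwise addition. For a subgraph $\mathcal G'$, $\mathbf 1_{\mathcal G'}$ is $1$ on vertices and edges of $\mathcal G'$ and $0$ elsewhere. An atom is a nonzero element that cannot be written as a sum of two nonzero elements. *)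

From mathcomp Require Import all_boot.
Set Implicit Arguments. Unset Strict Implicit. Unset Printing Implicit Defensive.

(* A graph: finite vertex type V, finite edge type E, and r : E -> {set V}
   assigning to each edge a two-element subset of V (multigraph, no loops). *)
Definition graph_ok (V E : finType) (r : E -> {set V}) : Prop :=
  forall e, #|r e| = 2.

(* A function on V ∪ E with values in N_0, represented by a pair of finite
   functions (values on vertices, values on edges). *)
Definition vfun (V E : finType) : Type := ({ffun V -> nat} * {ffun E -> nat})%type.

Definition is_agglomeration (V E : finType) (r : E -> {set V}) (a : vfun V E) : Prop :=
  forall v e, v \in r e -> a.2 e <= a.1 v.

Definition vfun_add (V E : finType) (a b : vfun V E) : vfun V E :=
  ([ffun v => a.1 v + b.1 v], [ffun e => a.2 e + b.2 e]).

Definition vfun_zero (V E : finType) : vfun V E := ([ffun _ => 0], [ffun _ => 0]).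

Definition is_atom (V E : finType) (r : E -> {set V}) (a : vfun V E) : Prop :=
  is_agglomeration r a /\ a <> vfun_zero V E /\
  forall b c, is_agglomeration r b -> is_agglomeration r c ->
    a = vfun_add b c -> b = vfun_zero V E \/ c = vfun_zero V E.

Definition is_subgraph (V E : finType) (r : E -> {set V}) (V' : {set V}) (E' : {set E}) : Prop :=
  forall e, e \in E' -> r e \subset V'.

Definition sub_adj (V E : finType) (r : E -> {set V}) (E' : {set E}) : rel V :=
  fun u v => [exists e in E', (u \in r e) && (v \in r e)].

Definition sub_connected (V E : finType) (r : E -> {set V}) (V' : {set V}) (E' : {set E}) : Prop :=
  forall u v, u \in V' -> v \in V' -> connect (sub_adj r E') u v.

Definition indicator (V E : finType) (V' : {set V}) (E' : {set E}) : vfun V E :=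
  ([ffun v => nat_of_bool (v \in V')], [ffun e => nat_of_bool (e \in E')]).

(** Every agglomeration [a] splits as [1_{supp a} + (a - 1)] (subtracting one wherever [a]
    is positive), so an atom is the indicator of its support.  The indicator of a subgraph
    splits along any vertex set [C] closed under its adjacency, so an atom's subgraph is
    connected.  Conversely, if [1_G' = b + c] with [G'] connected, the vertex support of [b]
    is closed under adjacency in [G']: on an edge [e] with ends [x, y] and [b x = 1] we get
    [c x = 0], hence [c e = 0], [b e = 1] and [b y = 1].  So [b] or [c] vanishes. *)

From mathcomp Require Import all_boot.
From mathcomp Require Import zify.

Set Implicit Arguments.
Unset Strict Implicit.
Unset Printing Implicit Defensive.

Section Agglomerations.
Variables (V E : finType) (r : E -> {set V}).
Implicit Types (a b c : vfun V E) (A C : {set V}) (F : {set E}).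

Definition vsupp a := [set v | 0 < a.1 v].
Definition esupp a := [set e | 0 < a.2 e].
Definition vfun_pred a : vfun V E := ([ffun v => (a.1 v).-1], [ffun e => (a.2 e).-1]).

Lemma vfunP a b : (forall v, a.1 v = b.1 v) -> (forall e, a.2 e = b.2 e) -> a = b.
Proof.
case: a b => [a1 a2] [b1 b2] /= h1 h2.
by rewrite (ffunP a1 b1).1 // (ffunP a2 b2).1.
Qed.

Lemma vfun_add1 a b c v : a = vfun_add b c -> a.1 v = b.1 v + c.1 v.
Proof. by move->; rewrite ffunE. Qed.

Lemma vfun_add2 a b c e : a = vfun_add b c -> a.2 e = b.2 e + c.2 e.
Proof. by move->; rewrite ffunE. Qed.

Lemma agglomeration_eq0 b : graph_ok r -> is_agglomeration r b ->
  vsupp b = set0 -> b = vfun_zero V E.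
Proof.
move=> hr hb hb0.
have b1_0 v : b.1 v = 0.
  have : v \notin vsupp b by rewrite hb0 in_set0.
  by rewrite inE; lia.
apply: vfunP => [v|e]; rewrite !ffunE //.
have /card_gt0P [v hv] : 0 < #|r e| by rewrite hr.
by have := hb v e hv; rewrite b1_0; lia.
Qed.

Lemma indicator_neq0 A F v : v \in A -> indicator A F <> vfun_zero V E.
Proof. by move=> hv /(congr1 (fun a => a.1 v)) /=; rewrite !ffunE hv. Qed.

Lemma indicator_agglomeration A F : is_subgraph r A F -> is_agglomeration r (indicator A F).
Proof.
move=> hsub v e hv; rewrite !ffunE.
by case heF: (e \in F) => //=; rewrite (subsetP (hsub e heF)).
Qed.

Lemma support_subgraph a : is_agglomeration r a -> is_subgraph r (vsupp a) (esupp a).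
Proof.
move=> ha e; rewrite inE => he; apply/subsetP => v hv.
by rewrite inE (leq_trans he (ha v e hv)).
Qed.

Lemma vfun_pred_agglomeration a : is_agglomeration r a -> is_agglomeration r (vfun_pred a).
Proof. by move=> ha v e hv; rewrite !ffunE; have := ha v e hv; lia. Qed.

Lemma vfun_add_support_pred a :
  a = vfun_add (indicator (vsupp a) (esupp a)) (vfun_pred a).
Proof. by apply: vfunP => [v|e]; rewrite !ffunE inE; [case: (a.1 v) | case: (a.2 e)]. Qed.

Lemma vfun_pred_eq0 a : vfun_pred a = vfun_zero V E -> a = indicator (vsupp a) (esupp a).
Proof.
case=> /ffunP h1 /ffunP h2; apply: vfunP => [v|e]; rewrite ffunE inE.
  by have := h1 v; rewrite !ffunE; case: (a.1 v) => [|[]].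
by have := h2 e; rewrite !ffunE; case: (a.2 e) => [|[]].
Qed.

Lemma atom_indicator_support a : graph_ok r -> is_atom r a ->
  a = indicator (vsupp a) (esupp a).
Proof.
move=> hr [ha [a_neq0 a_atom]].
have [ind0|] := a_atom _ _ (indicator_agglomeration (support_subgraph ha))
  (vfun_pred_agglomeration ha) (vfun_add_support_pred a); last exact: vfun_pred_eq0.
case: a_neq0; apply: agglomeration_eq0 => //; apply/setP => v; rewrite in_set0.
by apply/negbTE/negP => /indicator_neq0 /(_ ind0).
Qed.

Lemma indicator_split A C F G :
  indicator A F = vfun_add (indicator (A :&: C) (F :&: G)) (indicator (A :\: C) (F :\: G)).
Proof.
apply: vfunP => [v|e]; rewrite !ffunE !inE.
  by case: (v \in A); case: (v \in C).
by case: (e \in F); case: (e \in G).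
Qed.

Lemma sub_adj_sym F : symmetric (sub_adj r F).
Proof.
by move=> x y; apply/existsP/existsP => -[e /and3P [heF hx hy]]; exists e; apply/and3P.
Qed.

Definition edges_within C := [set e | r e \subset C].

Lemma subgraph_within A C F :
  is_subgraph r A F -> is_subgraph r (A :&: C) (F :&: edges_within C).
Proof. by move=> hsub e; rewrite !inE => /andP [/hsub AF CF]; rewrite subsetI AF. Qed.

Lemma closed_edge_within C F e x : closed (sub_adj r F) C ->
  e \in F -> x \in r e -> (x \in C) = (r e \subset C).
Proof.
move=> hC heF hx; apply/idP/subsetP => [xC y hy|/(_ x hx)//].
have xy : sub_adj r F x y by apply/existsP; exists e; rewrite heF hx.
by rewrite -(hC _ _ xy).
Qed.

Lemma subgraph_outside A C F : is_subgraph r A F -> closed (sub_adj r F) C ->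
  is_subgraph r (A :\: C) (F :\: edges_within C).
Proof.
move=> hsub hC e; rewrite !inE => /andP [hout heF]; apply/subsetP => x hx.
by rewrite !inE (closed_edge_within hC heF hx) hout (subsetP (hsub e heF)).
Qed.

Lemma atom_indicator_connected A F :
  is_subgraph r A F -> is_atom r (indicator A F) -> sub_connected r A F.
Proof.
move=> hsub [_ [_ atomAF]] u w hu hw.
pose C := [set x | connect (sub_adj r F) u x].
have hC : closed (sub_adj r F) C.
  apply: intro_closed; first exact/sym_connect_sym/sub_adj_sym.
  by move=> x y hxy; rewrite !inE => /connect_trans; apply; apply: connect1.
have [inner0|outer0] := atomAF _ _
  (indicator_agglomeration (subgraph_within (C := C) hsub))
  (indicator_agglomeration (subgraph_outside hsub hC)) (indicator_split _ _ _ _).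
  by exfalso; apply: (indicator_neq0 (v := u) _ inner0); rewrite !inE hu connect0.
apply: contraT => uw; exfalso; apply: (indicator_neq0 (v := w) _ outer0).
by rewrite !inE hw andbT.
Qed.

Lemma sub_adj_support_closed A F b c :
  is_subgraph r A F -> is_agglomeration r b -> is_agglomeration r c ->
  indicator A F = vfun_add b c -> closed (sub_adj r F) (vsupp b).
Proof.
move=> hsub hb hc hbc; apply: intro_closed; first exact/sym_connect_sym/sub_adj_sym.
move=> x y /existsP [e /and3P [heF hx hy]]; rewrite !inE.
have in_A z : z \in r e -> b.1 z + c.1 z = 1.
  by move=> hz; rewrite -(vfun_add1 z hbc) ffunE (subsetP (hsub e heF)).
have := vfun_add2 e hbc; rewrite ffunE heF.
have := in_A x hx; have := in_A y hy.
have := hb x e hx; have := hb y e hy; have := hc x e hx.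
lia.
Qed.

Lemma connected_indicator_atom A F : graph_ok r ->
  is_subgraph r A F -> A != set0 -> sub_connected r A F -> is_atom r (indicator A F).
Proof.
move=> hr hsub /set0Pn [x hx] hconn.
split; first exact: indicator_agglomeration.
split=> [|b c hb hc hbc]; first exact: indicator_neq0 hx.
have [b0|/eqP bneq0] := eqVneq b (vfun_zero V E); [by left | right].
have [u ub] : exists u, u \in vsupp b.
  by apply/set0Pn/eqP => supp0; apply: bneq0 (agglomeration_eq0 hr hb supp0).
have b_closed := sub_adj_support_closed hsub hb hc hbc.
have vsum v : nat_of_bool (v \in A) = b.1 v + c.1 v by rewrite -(vfun_add1 v hbc) ffunE.
have inA v : 0 < b.1 v + c.1 v -> v \in A by rewrite -vsum; case: (v \in A).
apply: agglomeration_eq0 => //; apply/setP => w; rewrite in_set0 inE.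
apply/negbTE/negP => cw.
have hw : w \in A by apply: inA; lia.
have hu : u \in A by apply: inA; move: ub; rewrite inE; lia.
have := closed_connect b_closed (hconn u w hu hw); rewrite ub inE => /esym bw.
have := vsum w; rewrite hw /=.
lia.
Qed.

End Agglomerations.

Theorem proposition4p5 (V E : finType) (r : E -> {set V}) (hr : graph_ok r)
    (a : vfun V E) (ha : is_agglomeration r a) :
  is_atom r a <->
  exists (V' : {set V}) (E' : {set E}),
    [/\ is_subgraph r V' E', V' != set0, sub_connected r V' E'
      & a = indicator V' E'].
Proof.
split=> [a_atom|[A [F [hsub A_neq0 hconn ->]]]]; last exact: connected_indicator_atom.
have a_ind := atom_indicator_support hr a_atom.
have hsub := support_subgraph ha.
exists (vsupp a), (esupp a); split=> //.
- apply/eqP => supp0; case: a_atom => _ [a_neq0 _].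
  exact: a_neq0 (agglomeration_eq0 hr ha supp0).
- by apply: atom_indicator_connected => //; rewrite -a_ind.
Qed.
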